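(* Let $M$ be a monoid, let $b_0,\dots,b_l,a,h\in M$ with $a$ and $h$ invertible, and suppose that $a^{-s}ha^s$ commutes with every $b_i$ for all $s\in\mathbb{Z}$. For integers $n_1,\dots,n_l$ put $u(t)=b_0t^{n_1}b_1t^{n_2}\cdots t^{n_l}b_l$ and $k=\sum_i n_i$. Then $$u(ah)=\begin{cases}\big(\prod_{j=1}^{k}a^{j}ha^{-j}\big)\,u(a) & \text{if } k>0,\\ \big(\prod_{j=0}^{-1-k}a^{-j}h^{-1}a^{j}\big)\,u(a) & \text{if } k<0,\\ u(a) & \text{if } k=0,\end{cases}$$ where the products are taken in increasing order of $j$. *)

From Stdlib Require Import ZArith List.
Import ListNotations.

Record monoid := Monoid {
  carrier :> Type;
  mul : carrier -> carrier -> carrier;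
  one : carrier;
  mulA : forall x y z, mul x (mul y z) = mul (mul x y) z;
  mul1x : forall x, mul one x = x;
  mulx1 : forall x, mul x one = x
}.
Arguments mul {m} _ _.
Arguments one {m}.

Definition is_inverse {M : monoid} (x x' : M) : Prop :=
  mul x x' = one /\ mul x' x = one.

Definition npow {M : monoid} (x : M) (n : nat) : M := Nat.iter n (mul x) one.

Definition zpow {M : monoid} (x x' : M) (n : Z) : M :=
  match n with
  | Z0 => one
  | Zpos p => npow x (Pos.to_nat p)
  | Zneg p => npow x' (Pos.to_nat p)
  end.

Definition oprod {M : monoid} (f : nat -> M) (s : list nat) : M :=
  fold_right (fun i acc => mul (f i) acc) one s.

(* u(t) = b_0 t^{n_1} b_1 t^{n_2} ... t^{n_l} b_l, for t invertible with inverse t' *)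
Definition word {M : monoid} (b : nat -> M) (n : nat -> Z) (l : nat) (t t' : M) : M :=
  mul (b 0%nat) (oprod (fun i => mul (zpow t t' (n i)) (b i)) (seq 1 l)).

Definition total_exp (n : nat -> Z) (l : nat) : Z :=
  fold_right Z.add 0%Z (map n (seq 1 l)).

From Stdlib Require Import ZArith List Lia.
Import ListNotations.
Open Scope Z_scope.

(* Write D(z) = (ah)^z a^-z ([defect z]).  Then D(m + k) = D(m) a^m D(k) a^-m, with D(1) = a h a^-1
   and D(-1) = h^-1, which yields the two explicit products for D(k).  Every
   a-conjugate of D(k) commutes with all b_i, so D can be pushed left through a
   prefix of the word u(a) at the cost of conjugating it by a^(exponent so far);
   peeling off one factor (ah)^(n_i) = D(n_i) a^(n_i) at a time gives
   u(ah) = D(k) u(a). *)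

Definition commute {M : monoid} (x y : M) : Prop := mul x y = mul y x.

Section MonoidFacts.
Variable M : monoid.

Lemma mulKr (z x y : M) : mul x y = one -> mul (mul z x) y = z.
Proof. intros E. rewrite <- mulA, E, mulx1. reflexivity. Qed.

Lemma npow_succ_r (x : M) (m : nat) : npow x (S m) = mul (npow x m) x.
Proof.
  unfold npow. induction m as [|m IH]; simpl in *.
  - rewrite mulx1, mul1x. reflexivity.
  - rewrite IH at 1. rewrite mulA. reflexivity.
Qed.

Lemma oprod_app (f : nat -> M) (s1 s2 : list nat) :
  oprod f (s1 ++ s2) = mul (oprod f s1) (oprod f s2).
Proof.
  induction s1 as [|i s1 IH]; simpl.
  - rewrite mul1x. reflexivity.
  - rewrite IH, mulA. reflexivity.
Qed.

Lemma oprod_rcons (f : nat -> M) (s : list nat) (i : nat) :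
  oprod f (s ++ [i]) = mul (oprod f s) (f i).
Proof. rewrite oprod_app. simpl. rewrite mulx1. reflexivity. Qed.

Lemma is_inverse_mul (x x' y y' : M) :
  is_inverse x x' -> is_inverse y y' -> is_inverse (mul x y) (mul y' x').
Proof.
  intros [X1 X2] [Y1 Y2]; split; rewrite !mulA.
  - rewrite (mulKr _ _ _ Y1), X1. reflexivity.
  - rewrite (mulKr _ _ _ X2), Y2. reflexivity.
Qed.

Lemma commute_mul_l (x y d : M) : commute x d -> commute y d -> commute (mul x y) d.
Proof.
  unfold commute. intros Cx Cy. rewrite <- mulA, Cy, mulA, Cx, mulA. reflexivity.
Qed.

Lemma commute_inverse_l (c c' d : M) : is_inverse c c' -> commute c d -> commute c' d.
Proof.
  unfold commute. intros [C1 C2] Cd.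
  transitivity (mul (mul c' d) (mul c c')). { rewrite C1, mulx1. reflexivity. }
  rewrite !mulA, <- (mulA _ c' d c), <- Cd, mulA, C2, mul1x. reflexivity.
Qed.

End MonoidFacts.

Arguments mulKr {M} z {x y}.

Section IntegerPowers.
Variables (M : monoid) (x x' : M).
Hypothesis Hx : is_inverse x x'.
Local Notation P := (zpow x x').

Lemma zpow_succ (z : Z) : P (z + 1) = mul (P z) x.
Proof.
  destruct Hx as [X1 X2]. destruct z as [|p|p].
  - cbn. unfold npow; simpl. rewrite mulx1, mul1x. reflexivity.
  - replace (Z.pos p + 1) with (Z.pos (Pos.succ p)) by lia. cbn [zpow].
    rewrite Pos2Nat.inj_succ, npow_succ_r. reflexivity.
  - destruct (Pos.succ_pred_or p) as [->|Hp].
    + cbn. unfold npow; simpl. rewrite mulx1. symmetry. exact X2.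
    + rewrite <- Hp.
      replace (Z.neg (Pos.succ (Pos.pred p)) + 1) with (Z.neg (Pos.pred p)) by lia.
      cbn [zpow]. rewrite Pos2Nat.inj_succ, npow_succ_r, (mulKr _ X2). reflexivity.
Qed.

Lemma zpow_pred (z : Z) : P (z - 1) = mul (P z) x'.
Proof.
  rewrite <- (Z.sub_add 1 z) at 2. rewrite zpow_succ, (mulKr _ (proj1 Hx)). reflexivity.
Qed.

Lemma zpow_add (m k : Z) : P (m + k) = mul (P m) (P k).
Proof.
  induction k as [|k IH|k IH] using Z.peano_ind.
  - rewrite Z.add_0_r. cbn. rewrite mulx1. reflexivity.
  - rewrite <- Z.add_1_r, Z.add_assoc, !zpow_succ, IH, mulA. reflexivity.
  - rewrite <- Z.sub_1_r, Z.add_sub_assoc, !zpow_pred, IH, mulA. reflexivity.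
Qed.

Lemma zpow_oppr (z : Z) : mul (P z) (P (- z)) = one.
Proof. rewrite <- zpow_add, Z.add_opp_diag_r. reflexivity. Qed.

Lemma zpow_oppl (z : Z) : mul (P (- z)) (P z) = one.
Proof. rewrite <- zpow_add, Z.add_opp_diag_l. reflexivity. Qed.

End IntegerPowers.

Arguments zpow_succ {M x x'} Hx z.
Arguments zpow_pred {M x x'} Hx z.
Arguments zpow_add {M x x'} Hx m k.
Arguments zpow_oppr {M x x'} Hx z.
Arguments zpow_oppl {M x x'} Hx z.

Section Conjugation.
Variables (M : monoid) (a a' : M).
Hypothesis Ha : is_inverse a a'.
Local Notation P := (zpow a a').

Definition aconj (m : Z) (y : M) : M := mul (mul (P m) y) (P (- m)).

Lemma aconj_mul (m : Z) (x y : M) : aconj m (mul x y) = mul (aconj m x) (aconj m y).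
Proof. unfold aconj. rewrite !mulA, (mulKr _ (zpow_oppl Ha m)). reflexivity. Qed.

Lemma aconj_add (m s : Z) (y : M) : aconj m (aconj s y) = aconj (m + s) y.
Proof.
  unfold aconj. replace (- (m + s)) with (- s + - m) by lia.
  rewrite !(zpow_add Ha), !mulA. reflexivity.
Qed.

Lemma aconj0 (y : M) : aconj 0 y = y.
Proof. unfold aconj. cbn. rewrite mul1x, mulx1. reflexivity. Qed.

Lemma zpow_mul_aconj (m : Z) (y : M) : mul (P m) y = mul (aconj m y) (P m).
Proof. unfold aconj. rewrite (mulKr _ (zpow_oppl Ha m)). reflexivity. Qed.

Lemma is_inverse_aconj (m : Z) (y y' : M) :
  is_inverse y y' -> is_inverse (aconj m y) (aconj m y').
Proof.
  intros [Y1 Y2]. unfold is_inverse. rewrite <- !aconj_mul, Y1, Y2.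
  unfold aconj. rewrite mulx1, (zpow_oppr Ha). split; reflexivity.
Qed.

Section Defect.
Variables h h' : M.
Hypothesis Hh : is_inverse h h'.
Local Notation Q := (zpow (mul a h) (mul h' a')).
Let Hah : is_inverse (mul a h) (mul h' a') := is_inverse_mul M a a' h h' Ha Hh.

Definition defect (z : Z) : M := mul (Q z) (P (- z)).

Lemma zpow_ah (z : Z) : Q z = mul (defect z) (P z).
Proof. unfold defect. rewrite (mulKr _ (zpow_oppl Ha z)). reflexivity. Qed.

Lemma defect_add (m k : Z) : defect (m + k) = mul (defect m) (aconj m (defect k)).
Proof.
  unfold defect, aconj. rewrite !mulA, (mulKr _ (zpow_oppl Ha m)).
  replace (- (m + k)) with (- k + - m) by lia.
  rewrite (zpow_add Ha (- k) (- m)), (zpow_add Hah), !mulA. reflexivity.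
Qed.

Lemma defect0 : defect 0 = one.
Proof. unfold defect. cbn. apply mulx1. Qed.

Lemma defect1 : defect 1 = aconj 1 h.
Proof. unfold defect, aconj. simpl. rewrite !mulx1. reflexivity. Qed.

Lemma defectN1 : defect (-1) = h'.
Proof. unfold defect. simpl. rewrite !mulx1, (mulKr _ (proj2 Ha)). reflexivity. Qed.

Lemma defect_nat (m : nat) :
  defect (Z.of_nat m) = oprod (fun j => aconj (Z.of_nat j) h) (seq 1 m).
Proof.
  induction m as [|m IH].
  - exact defect0.
  - rewrite seq_S, oprod_rcons, <- IH.
    replace (Z.of_nat (1 + m)) with (Z.of_nat m + 1) by lia.
    replace (Z.of_nat (S m)) with (Z.of_nat m + 1) by lia.
    rewrite defect_add, defect1, aconj_add. reflexivity.
Qed.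

Lemma defect_opp_nat (m : nat) :
  defect (- Z.of_nat m) =
  oprod (fun j => mul (mul (P (- Z.of_nat j)) h') (P (Z.of_nat j))) (seq 0 m).
Proof.
  induction m as [|m IH].
  - exact defect0.
  - rewrite seq_S, oprod_rcons, <- IH, Nat.add_0_l.
    replace (- Z.of_nat (S m)) with (- Z.of_nat m + -1) by lia.
    rewrite defect_add, defectN1. unfold aconj. rewrite Z.opp_involutive. reflexivity.
Qed.

Lemma defect_cases (k : Z) :
  defect k =
  (if 0 <? k then oprod (fun j => mul (mul (P (Z.of_nat j)) h) (P (- Z.of_nat j)))
                        (seq 1 (Z.to_nat k))
   else if k <? 0 then oprod (fun j => mul (mul (P (- Z.of_nat j)) h') (P (Z.of_nat j)))
                             (seq 0 (Z.to_nat (- k)))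
   else one).
Proof.
  destruct (Z.ltb_spec 0 k); [|destruct (Z.ltb_spec k 0)].
  - rewrite <- (Z2Nat.id k) at 1 by lia. apply defect_nat.
  - rewrite <- (Z.opp_involutive k) at 1. rewrite <- (Z2Nat.id (- k)) at 1 by lia.
    apply defect_opp_nat.
  - replace k with 0 by lia. exact defect0.
Qed.

Section Words.
Variables (l : nat) (b : nat -> M) (n : nat -> Z).
Hypothesis Hcomm : forall (s : Z) (i : nat), (i <= l)%nat ->
  mul (mul (mul (P (- s)) h) (P s)) (b i) = mul (b i) (mul (mul (P (- s)) h) (P s)).

Definition aconj_commute_b (y : M) : Prop :=
  forall (m : Z) (i : nat), (i <= l)%nat -> commute (aconj m y) (b i).

Lemma aconj_commute_b_commute (y : M) (i : nat) :
  aconj_commute_b y -> (i <= l)%nat -> commute y (b i).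
Proof. intros Cy Hi. rewrite <- (aconj0 y). exact (Cy 0 i Hi). Qed.

Lemma aconj_commute_b_mul (x y : M) :
  aconj_commute_b x -> aconj_commute_b y -> aconj_commute_b (mul x y).
Proof.
  intros Cx Cy m i Hi. rewrite aconj_mul. apply commute_mul_l; auto.
Qed.

Lemma aconj_commute_b_aconj (s : Z) (y : M) :
  aconj_commute_b y -> aconj_commute_b (aconj s y).
Proof. intros Cy m i Hi. rewrite aconj_add. auto. Qed.

Lemma aconj_commute_b_h : aconj_commute_b h.
Proof.
  intros m i Hi. pose proof (Hcomm (- m) i Hi) as E.
  rewrite Z.opp_involutive in E. exact E.
Qed.

Lemma aconj_commute_b_h' : aconj_commute_b h'.
Proof.
  intros m i Hi. apply (commute_inverse_l _ (aconj m h)).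
  - apply is_inverse_aconj, Hh.
  - apply aconj_commute_b_h, Hi.
Qed.

Lemma aconj_commute_b_defect (z : Z) : aconj_commute_b (defect z).
Proof.
  induction z as [|z IH|z IH] using Z.peano_ind.
  - rewrite defect0. intros m i _. unfold commute, aconj.
    rewrite mulx1, (zpow_oppr Ha), mul1x, mulx1. reflexivity.
  - rewrite <- Z.add_1_r, defect_add, defect1.
    apply aconj_commute_b_mul; [exact IH|].
    do 2 apply aconj_commute_b_aconj. exact aconj_commute_b_h.
  - replace (Z.pred z) with (z + -1) by lia. rewrite defect_add, defectN1.
    apply aconj_commute_b_mul; [exact IH|].
    apply aconj_commute_b_aconj. exact aconj_commute_b_h'.
Qed.

Lemma word_S (t t' : M) (i : nat) :
  word b n (S i) t t' = mul (word b n i t t') (mul (zpow t t' (n (S i))) (b (S i))).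
Proof. unfold word. rewrite seq_S, oprod_rcons, mulA. reflexivity. Qed.

Lemma total_exp_S (i : nat) : total_exp n (S i) = total_exp n i + n (S i).
Proof.
  unfold total_exp. rewrite seq_S, map_app, fold_right_app. simpl.
  generalize (map n (seq 1 i)). intros s. induction s; simpl; lia.
Qed.

Lemma word_mul_commute_b (i : nat) (y : M) : (i <= l)%nat -> aconj_commute_b y ->
  mul (word b n i a a') y = mul (aconj (total_exp n i) y) (word b n i a a').
Proof.
  revert y. induction i as [|i IH]; intros y Hi Cy.
  - unfold word. simpl. rewrite mulx1. cbn [total_exp map fold_right].
    rewrite aconj0. symmetry. exact (aconj_commute_b_commute _ _ Cy Hi).
  - rewrite word_S, total_exp_S, <- aconj_add, <- !mulA.
    rewrite <- (aconj_commute_b_commute _ _ Cy Hi), (mulA _ _ y), zpow_mul_aconj, !mulA.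
    rewrite (IH _ ltac:(lia) (aconj_commute_b_aconj _ _ Cy)). reflexivity.
Qed.

Lemma word_ah (i : nat) : (i <= l)%nat ->
  word b n i (mul a h) (mul h' a') = mul (defect (total_exp n i)) (word b n i a a').
Proof.
  induction i as [|i IH]; intros Hi.
  - change (total_exp n 0) with 0. rewrite defect0, mul1x. reflexivity.
  - rewrite !word_S, total_exp_S, IH by lia. rewrite zpow_ah, defect_add, !mulA.
    rewrite <- (mulA _ _ (word b n i a a')), word_mul_commute_b, !mulA by
      (lia || apply aconj_commute_b_defect).
    reflexivity.
Qed.

End Words.
End Defect.
End Conjugation.

Theorem lemma1 (M : monoid) (l : nat) (b : nat -> M) (n : nat -> Z)
  (a a' h h' : M) (Ha : is_inverse a a') (Hh : is_inverse h h')
  (Hcomm : forall (s : Z) (i : nat), (i <= l)%nat ->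
     mul (mul (mul (zpow a a' (- s)) h) (zpow a a' s)) (b i)
     = mul (b i) (mul (mul (zpow a a' (- s)) h) (zpow a a' s))) :
  let k := total_exp n l in
  word b n l (mul a h) (mul h' a') =
  (if (0 <? k)%Z then
     mul (oprod (fun j => mul (mul (zpow a a' (Z.of_nat j)) h) (zpow a a' (- Z.of_nat j)))
                (seq 1 (Z.to_nat k)))
         (word b n l a a')
   else if (k <? 0)%Z then
     mul (oprod (fun j => mul (mul (zpow a a' (- Z.of_nat j)) h') (zpow a a' (Z.of_nat j)))
                (seq 0 (Z.to_nat (- k))))
         (word b n l a a')
   else word b n l a a').
Proof.
  intros k.
  rewrite (word_ah M a a' Ha h h' Hh l b n Hcomm l (le_n l)).
  rewrite (defect_cases M a a' Ha h h' Hh). fold k.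
  destruct (0 <? k); [|destruct (k <? 0)]; try reflexivity.
  apply mul1x.
Qed.
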